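(* Let $M$ be a commutative monoid (written multiplicatively), $n>1$ and $0\le p<q\le n$. The simplicial set $K(M,2)$ satisfies the Beck–Chevalley condition $\mathrm{BC}_{p,q}[n]$ if and only if: for any elements $a_{ijk}\in M$, indexed by $0\le i<j<k\le n$ with $\{p,q\}\not\subset\{i,j,k\}$, satisfying $a_{ikl}a_{ijk}=a_{ijl}a_{jkl}$ for all $0\le i<j<k<l\le n$ with $\{p,q\}\not\subset\{i,j,k,l\}$, there exist elements $x_{ipq}$ ($0\le i<p$), $y_{pjq}$ ($p<j<q$), $z_{pqk}$ ($q<k\le n$) of $M$ satisfying (1) $x_{ipq}a_{ijp}=a_{ijq}x_{jpq}$ for all $0\le i<j<p$; (2) $y_{pkq}a_{pjk}=y_{pjq}a_{jkq}$ for all $p<j<k<q$; (3) $a_{pkl}z_{pqk}=z_{pql}a_{qkl}$ for all $q<k<l\le n$; (4) $x_{ipq}y_{pjq}=a_{ijq}a_{ipj}$ for all $0\le i<p<j<q$; (5) $a_{iqk}x_{ipq}=a_{ipk}z_{pqk}$ for all $0\le i<p<q<k\le n$; (6) $z_{pqk}y_{pjq}=a_{pjk}a_{jqk}$ for all $p<j<q<k\le n$.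
   Context: For a commutative monoid $M$, $K(M,2)$ is the simplicial set whose $n$-simplices are families $(a_{ijk})_{0\le i<j<k\le n}$ of elements of $M$ with $a_{ikl}a_{ijk}=a_{ijl}a_{jkl}$ for all $0\le i<j<k<l\le n$; the $j$-th face map omits all entries involving index $j$ (and reindexes), and degeneracies repeat an index and insert the unit of $M$. The Beck–Chevalley condition $\mathrm{BC}_{p,q}[n]$ on a simplicial set $S$: for any $(n-1)$-simplices $c_p,c_q$ with $d_pc_q=d_{q-1}c_p$ there exists an $n$-simplex $x$ with $d_px=c_p$, $d_qx=c_q$. *)

From HB Require Import structures.
From mathcomp Require Import all_boot all_order all_algebra.
Set Implicit Arguments. Unset Strict Implicit. Unset Printing Implicit Defensive.
Import GRing.Theory.
Local Open Scope ring_scope.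

(* A commutative monoid M is an nmodType (additive notation: the paper's
   product a*b is written a + b, the unit is 0). *)

(* Raw families of elements of M indexed by triples of naturals; only the
   entries with 0 <= i < j < k <= n matter for an n-simplex. *)
Definition fam3 (M : nmodType) := nat -> nat -> nat -> M.

Definition K2simplex (M : nmodType) (n : nat) (a : fam3 M) : Prop :=
  forall i j k l : nat, (i < j)%N -> (j < k)%N -> (k < l)%N -> (l <= n)%N ->
    a i k l + a i j k = a i j l + a j k l.

Definition K2eq (M : nmodType) (n : nat) (a b : fam3 M) : Prop :=
  forall i j k : nat, (i < j)%N -> (j < k)%N -> (k <= n)%N -> a i j k = b i j k.

Definition coface (j i : nat) : nat := if (i < j)%N then i else i.+1.

Definition K2face (M : nmodType) (j : nat) (a : fam3 M) : fam3 M :=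
  fun i k l => a (coface j i) (coface j k) (coface j l).

Definition K2_BC (M : nmodType) (p q n : nat) : Prop :=
  forall cp cq : fam3 M,
    K2simplex n.-1 cp -> K2simplex n.-1 cq ->
    K2eq n.-2 (K2face p cq) (K2face q.-1 cp) ->
    exists x : fam3 M,
      [/\ K2simplex n x, K2eq n.-1 (K2face p x) cp & K2eq n.-1 (K2face q x) cq].

Definition not_both (p q : nat) (s : seq nat) : bool :=
  ~~ ((p \in s) && (q \in s)).

Definition K2_BC_cond (M : nmodType) (p q n : nat) : Prop :=
  forall a : fam3 M,
    (forall i j k l : nat, (i < j)%N -> (j < k)%N -> (k < l)%N -> (l <= n)%N ->
       not_both p q [:: i; j; k; l] ->
       a i k l + a i j k = a i j l + a j k l) ->
    exists x y z : nat -> M,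
      (forall i j, (i < j)%N -> (j < p)%N ->
             x i + a i j p = a i j q + x j) /\
          (forall j k, (p < j)%N -> (j < k)%N -> (k < q)%N ->
             y k + a p j k = y j + a j k q) /\
          (forall k l, (q < k)%N -> (k < l)%N -> (l <= n)%N ->
             a p k l + z k = z l + a q k l) /\
          (forall i j, (i < p)%N -> (p < j)%N -> (j < q)%N ->
             x i + y j = a i j q + a i p j) /\
          (forall i k, (i < p)%N -> (q < k)%N -> (k <= n)%N ->
             a i q k + x i = a i p k + z k) /\
          (forall j k, (p < j)%N -> (j < q)%N -> (q < k)%N -> (k <= n)%N ->
             z k + y j = a p j k + a j q k).

From mathcomp Require Import all_boot all_algebra zify.

(* Two (n-1)-simplices
   c_p, c_q with d_p c_q = d_{q-1} c_p prescribe exactly the entries a_{ijk}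
   with {p,q} not contained in {i,j,k}; they glue to one family satisfying
   every cocycle identity on four indices not containing both p and q, and
   conversely every such family arises from its faces d_p, d_q.  A filler is
   then a choice of the missing entries x_i = a_{ipq}, y_j = a_{pjq},
   z_k = a_{pqk}, and the cocycle identities on the four-index sets containing
   p and q are exactly (1)-(6), one for each position of p and q among the
   four indices. *)

Set Implicit Arguments.
Unset Strict Implicit.

Ltac mem_lia := rewrite ?/not_both ?inE; lia.

Lemma coface_bump : coface =2 bump.
Proof. by move=> j i; rewrite /coface /bump; case: ltnP. Qed.

Lemma ltn_bump2 h i j : (bump h i < bump h j) = (i < j).
Proof. by rewrite !ltnNge leq_bump2. Qed.

Lemma bump_leq h i n : 0 < n -> i <= n.-1 -> bump h i <= n.
Proof. rewrite /bump; lia. Qed.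

Lemma ltn_unbump h i j : i < j -> i != h -> unbump h i < unbump h j.
Proof. rewrite /unbump; lia. Qed.

Lemma unbump_leq h i n : h <= n -> i <= n -> i != h -> unbump h i <= n.-1.
Proof. rewrite /unbump; lia. Qed.

Lemma bump_bump_pred p q i : p < q -> bump q (bump p i) = bump p (bump q.-1 i).
Proof.
move=> lt_pq; rewrite bumpC; congr (bump _ (bump _ _));
by rewrite /bump /unbump; lia.
Qed.

Lemma unbump_unbump_pred p q i : p < q -> i != q ->
  unbump p (unbump q i) = unbump q.-1 (unbump p i).
Proof. rewrite /unbump; lia. Qed.

Section K2.

Variable M : nmodType.
Implicit Types (a c s : fam3 M) (x y z : nat -> M).

Definition K2cocycle a i j k l : Prop :=
  (a i k l + a i j k = a i j l + a j k l)%R.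

Definition K2simplex_off p q n a : Prop :=
  forall i j k l, i < j -> j < k -> k < l -> l <= n ->
    not_both p q [:: i; j; k; l] -> K2cocycle a i j k l.

Definition K2unface j c : fam3 M :=
  fun i k l => c (unbump j i) (unbump j k) (unbump j l).

Lemma K2faceE j a i k l : K2face j a i k l = a (bump j i) (bump j k) (bump j l).
Proof. by rewrite /K2face !coface_bump. Qed.

Lemma K2face_comm p q a i j k :
  p < q -> K2face p (K2face q a) i j k = K2face q.-1 (K2face p a) i j k.
Proof. by move=> lt_pq; rewrite !K2faceE !(bump_bump_pred _ lt_pq). Qed.

Lemma K2faceK j a i k l :
  j \notin [:: i; k; l] -> K2unface j (K2face j a) i k l = a i k l.
Proof.
by rewrite !inE => hj; rewrite /K2unface K2faceE !unbumpK ?inE //; lia.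
Qed.

Lemma eq_K2simplex n s c : K2eq n s c -> K2simplex n s -> K2simplex n c.
Proof. by move=> E S i j k l ij jk kl ln; rewrite -!E; try exact: S; lia. Qed.

Lemma K2eq_faceP n j s c : j <= n ->
  K2eq n.-1 (K2face j s) c <->
  (forall i k l, i < k -> k < l -> l <= n -> j \notin [:: i; k; l] ->
     s i k l = K2unface j c i k l).
Proof.
move=> le_jn; split=> [E i k l ik kl ln | E i k l ik kl ln].
  rewrite !inE => hj.
  rewrite /K2unface -E ?K2faceE ?unbumpK ?inE ?ltn_unbump ?unbump_leq //; lia.
have n_gt0 : 0 < n by move: ik kl ln; lia.
rewrite K2faceE E ?ltn_bump2 ?bump_leq //;
  last by rewrite !inE !(negbTE (neq_bump _ _)).
by rewrite /K2unface !bumpK.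
Qed.

Lemma K2simplex_face n j a : 0 < n ->
  (forall i k l m, i < k -> k < l -> l < m -> m <= n ->
     j \notin [:: i; k; l; m] -> K2cocycle a i k l m) ->
  K2simplex n.-1 (K2face j a).
Proof.
move=> n_gt0 Ha i k l m ik kl lm mn; rewrite /K2cocycle !K2faceE.
by apply: Ha; rewrite ?ltn_bump2 ?bump_leq // !inE !(negbTE (neq_bump _ _)).
Qed.

Lemma K2unface_cocycle n j c i k l m : j <= n -> K2simplex n.-1 c ->
  i < k -> k < l -> l < m -> m <= n -> j \notin [:: i; k; l; m] ->
  K2cocycle (K2unface j c) i k l m.
Proof.
rewrite !inE => le_jn Sc ik kl lm mn hj.
apply: Sc; rewrite ?ltn_unbump ?unbump_leq //; lia.
Qed.

Section Fill.

Variables (p q n : nat) (a : fam3 M).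
Hypotheses (lt_pq : p < q) (le_qn : q <= n).

(* On increasing triples, the entries at (i,p,q), (p,j,q) and (p,q,k) become
   x i, y j and z k; all other entries are those of a. *)
Definition K2fill x y z : fam3 M :=
  fun i j k => if not_both p q [:: i; j; k] then a i j k
               else if i == p then (if j == q then z k else y j) else x i.

Definition BC_equations x y z : Prop :=
  (forall i j, i < j -> j < p -> (x i + a i j p = a i j q + x j)%R) /\
  (forall j k, p < j -> j < k -> k < q -> (y k + a p j k = y j + a j k q)%R) /\
  (forall k l, q < k -> k < l -> l <= n -> (a p k l + z k = z l + a q k l)%R) /\
  (forall i j, i < p -> p < j -> j < q -> (x i + y j = a i j q + a i p j)%R) /\
  (forall i k, i < p -> q < k -> k <= n -> (a i q k + x i = a i p k + z k)%R) /\
  (forall j k, p < j -> j < q -> q < k -> k <= n ->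
     (z k + y j = a p j k + a j q k)%R).

Lemma K2fill_off x y z i j k :
  not_both p q [:: i; j; k] -> K2fill x y z i j k = a i j k.
Proof. by rewrite /K2fill => ->. Qed.

Lemma not_both_pq i j k :
  p \in [:: i; j; k] -> q \in [:: i; j; k] -> not_both p q [:: i; j; k] = false.
Proof. by rewrite /not_both => -> ->. Qed.

Lemma K2fill_ipq x y z i : i != p -> K2fill x y z i p q = x i.
Proof. by rewrite /K2fill not_both_pq ?inE ?eqxx ?orbT // => /negbTE->. Qed.

Lemma K2fill_pjq x y z j : j != q -> K2fill x y z p j q = y j.
Proof. by rewrite /K2fill not_both_pq ?inE ?eqxx ?orbT // => /negbTE->. Qed.

Lemma K2fill_pqk x y z k : K2fill x y z p q k = z k.
Proof. by rewrite /K2fill not_both_pq ?inE ?eqxx ?orbT. Qed.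

Lemma K2fill_cocycle_ijpq x y z i j : i < j -> j < p ->
  K2cocycle (K2fill x y z) i j p q <-> (x i + a i j p = a i j q + x j)%R.
Proof. by move=> *; rewrite /K2cocycle !K2fill_ipq ?K2fill_off //; mem_lia. Qed.

Lemma K2fill_cocycle_pjkq x y z j k : p < j -> j < k -> k < q ->
  K2cocycle (K2fill x y z) p j k q <-> (y k + a p j k = y j + a j k q)%R.
Proof. by move=> *; rewrite /K2cocycle !K2fill_pjq ?K2fill_off //; mem_lia. Qed.

Lemma K2fill_cocycle_pqkl x y z k l : q < k -> k < l ->
  K2cocycle (K2fill x y z) p q k l <-> (a p k l + z k = z l + a q k l)%R.
Proof. by move=> *; rewrite /K2cocycle !K2fill_pqk ?K2fill_off //; mem_lia. Qed.

Lemma K2fill_cocycle_ipjq x y z i j : i < p -> p < j -> j < q ->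
  K2cocycle (K2fill x y z) i p j q <-> (x i + y j = a i j q + a i p j)%R.
Proof.
move=> *; rewrite /K2cocycle K2fill_ipq ?K2fill_pjq ?K2fill_off; try mem_lia.
by split=> /esym.
Qed.

Lemma K2fill_cocycle_ipqk x y z i k : i < p -> q < k ->
  K2cocycle (K2fill x y z) i p q k <-> (a i q k + x i = a i p k + z k)%R.
Proof.
by move=> *; rewrite /K2cocycle K2fill_ipq ?K2fill_pqk ?K2fill_off //; mem_lia.
Qed.

Lemma K2fill_cocycle_pjqk x y z j k : p < j -> j < q -> q < k ->
  K2cocycle (K2fill x y z) p j q k <-> (z k + y j = a p j k + a j q k)%R.
Proof.
by move=> *; rewrite /K2cocycle K2fill_pqk ?K2fill_pjq ?K2fill_off //; mem_lia.
Qed.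

Lemma K2fill_simplexP x y z : K2simplex_off p q n a ->
  K2simplex n (K2fill x y z) <-> BC_equations x y z.
Proof.
move=> Ha; split=> [S | [E1 [E2 [E3 [E4 [E5 E6]]]]] i j k l ij jk kl ln].
  split; [|split; [|split; [|split; [|split]]]].
  - move=> i j ij jp; apply/(K2fill_cocycle_ijpq x y z ij jp).
    exact: S i j p q ij jp lt_pq le_qn.
  - move=> j k pj jk kq; apply/(K2fill_cocycle_pjkq x y z pj jk kq).
    exact: S p j k q pj jk kq le_qn.
  - move=> k l qk kl ln; apply/(K2fill_cocycle_pqkl x y z qk kl).
    exact: S p q k l lt_pq qk kl ln.
  - move=> i j ip pj jq; apply/(K2fill_cocycle_ipjq x y z ip pj jq).
    exact: S i p j q ip pj jq le_qn.
  - move=> i k ip qk kn; apply/(K2fill_cocycle_ipqk x y z ip qk).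
    exact: S i p q k ip lt_pq qk kn.
  - move=> j k pj jq qk kn; apply/(K2fill_cocycle_pjqk x y z pj jq qk).
    exact: S p j q k pj jq qk kn.
have [nb | nb] := boolP (not_both p q [:: i; j; k; l]).
  by rewrite /K2cocycle !K2fill_off; try exact: Ha; move: nb; mem_lia.
have : (k = p /\ l = q) \/ (i = p /\ l = q) \/ (i = p /\ j = q) \/
       (j = p /\ l = q) \/ (j = p /\ k = q) \/ (i = p /\ k = q).
  by move: nb; mem_lia.
case=> [[? ?]|[[? ?]|[[? ?]|[[? ?]|[[? ?]|[? ?]]]]]]; subst.
- by apply/(K2fill_cocycle_ijpq x y z ij jk); apply: E1.
- by apply/(K2fill_cocycle_pjkq x y z ij jk kl); apply: E2.
- by apply/(K2fill_cocycle_pqkl x y z jk kl); apply: E3.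
- by apply/(K2fill_cocycle_ipjq x y z ij jk kl); apply: E4.
- by apply/(K2fill_cocycle_ipqk x y z ij kl); apply: E5.
- by apply/(K2fill_cocycle_pjqk x y z ij jk kl); apply: E6.
Qed.

Lemma K2eq_fill s :
  (forall i j k, i < j -> j < k -> k <= n -> not_both p q [:: i; j; k] ->
     s i j k = a i j k) ->
  K2eq n s (K2fill (fun i => s i p q) (fun j => s p j q) (fun k => s p q k)).
Proof.
move=> sa i j k ij jk kn.
have [nb | nb] := boolP (not_both p q [:: i; j; k]).
  by rewrite K2fill_off ?sa.
have : (j = p /\ k = q) \/ (i = p /\ k = q) \/ (i = p /\ j = q).
  by move: nb; mem_lia.
case=> [[? ?]|[[? ?]|[? ?]]]; subst.
- by rewrite K2fill_ipq //; lia.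
- by rewrite K2fill_pjq //; lia.
- by rewrite K2fill_pqk.
Qed.

End Fill.

Section Glue.

Variables (p q n : nat) (cp cq : fam3 M).
Hypotheses (lt_pq : p < q) (le_qn : q <= n).
Hypothesis face_pq : K2eq n.-2 (K2face p cq) (K2face q.-1 cp).

Definition K2glue : fam3 M :=
  fun i j k => if q \in [:: i; j; k] then K2unface p cp i j k
               else K2unface q cq i j k.

Lemma K2unface_compat i j k : i < j -> j < k -> k <= n ->
  p \notin [:: i; j; k] -> q \notin [:: i; j; k] ->
  K2unface q cq i j k = K2unface p cp i j k.
Proof.
rewrite !inE => ij jk kn hp hq.
have := @face_pq (unbump p (unbump q i)) (unbump p (unbump q j))
                 (unbump p (unbump q k)).
rewrite !K2faceE !unbumpK ?(unbump_unbump_pred lt_pq) ?unbumpK;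
  first by apply; rewrite /unbump; lia.
all: rewrite ?inE ?/unbump; lia.
Qed.

Lemma K2glue_q i j k :
  q \notin [:: i; j; k] -> K2glue i j k = K2unface q cq i j k.
Proof. by rewrite /K2glue => /negbTE->. Qed.

Lemma K2glue_p i j k : i < j -> j < k -> k <= n -> p \notin [:: i; j; k] ->
  K2glue i j k = K2unface p cp i j k.
Proof.
by rewrite /K2glue; case: ifP => // /negbT hq *; apply: K2unface_compat.
Qed.

Lemma K2glue_simplex_off :
  K2simplex n.-1 cp -> K2simplex n.-1 cq -> K2simplex_off p q n K2glue.
Proof.
move=> Sp Sq i j k l ij jk kl ln; rewrite /not_both negb_and => /orP[hp | hq].
- rewrite /K2cocycle !K2glue_p; try apply: K2unface_cocycle;
    try exact: Sp; move: hp; mem_lia.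
- rewrite /K2cocycle !K2glue_q; try apply: K2unface_cocycle;
    try exact: Sq; move: hq; mem_lia.
Qed.

End Glue.

End K2.

Lemma K2_BC_cond_of_BC (M : nmodType) (n p q : nat) :
  p < q -> q <= n -> K2_BC M p q n -> K2_BC_cond M p q n.
Proof.
move=> lt_pq le_qn BC a Ha.
have le_pn : p <= n by lia.
have face_simplex j : j \in [:: p; q] -> K2simplex n.-1 (K2face j a).
  move=> hj; apply: K2simplex_face; first lia.
  by move=> i k l m ik kl lm mn hjs; apply: Ha => //; move: hj hjs; mem_lia.
have face_comm : K2eq n.-2 (K2face p (K2face q a)) (K2face q.-1 (K2face p a)).
  by move=> i j k *; apply: K2face_comm.
have [s [Ss Sp Sq]] := BC _ _ (face_simplex p (mem_head p [:: q]))
  (face_simplex q (mem_last p [:: q])) face_comm.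
have sa i j k : i < j -> j < k -> k <= n -> not_both p q [:: i; j; k] ->
    s i j k = a i j k.
  move=> ij jk kn; rewrite /not_both negb_and => /orP[hp | hq].
  - by rewrite ((K2eq_faceP _ _ le_pn).1 Sp) ?K2faceK.
  - by rewrite ((K2eq_faceP _ _ le_qn).1 Sq) ?K2faceK.
exists (fun i => s i p q), (fun j => s p j q), (fun k => s p q k).
apply/(K2fill_simplexP lt_pq le_qn _ _ _ Ha).
exact: eq_K2simplex (K2eq_fill lt_pq le_qn sa) Ss.
Qed.

Lemma K2_BC_of_BC_cond (M : nmodType) (n p q : nat) :
  p < q -> q <= n -> K2_BC_cond M p q n -> K2_BC M p q n.
Proof.
move=> lt_pq le_qn cond cp cq Sp Sq face_pq.
have le_pn : p <= n by lia.
have Ha := K2glue_simplex_off lt_pq le_qn face_pq Sp Sq.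
have [x [y [z E]]] := cond _ Ha.
exists (K2fill p q (K2glue p q cp cq) x y z); split.
- exact/(K2fill_simplexP lt_pq le_qn _ _ _ Ha).
- apply/K2eq_faceP => // i k l ik kl ln hp.
  rewrite K2fill_off ?(K2glue_p lt_pq le_qn face_pq) //.
  by rewrite /not_both (negbTE hp).
- apply/K2eq_faceP => // i k l ik kl ln hq.
  rewrite K2fill_off ?K2glue_q //.
  by rewrite /not_both (negbTE hq) andbF.
Qed.

Theorem mainTheorem9 (M : nmodType) (n p q : nat) :
  (1 < n)%N -> (p < q)%N -> (q <= n)%N ->
  (K2_BC M p q n <-> K2_BC_cond M p q n).
Proof.
move=> _ lt_pq le_qn; split.
- exact: K2_BC_cond_of_BC.
- exact: K2_BC_of_BC_cond.
Qed.
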